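(* Let $P,Q\in\Gamma_n$ and $0<r\le R$ with $r\le p_i/q_i\le R$ for all $i$. Let $s,t\in\mathbb{R}$ with $2\le s\le4$ and $2\le t\le4$. Then $$\frac{1}{R^{s+1}}\Big(\frac{R+1}{2}\Big)^{s-t}\frac{(4-s)R+s}{tR+4-t}\,\zeta_t(P\|Q)\le\zeta_s(Q\|P)\le\frac{1}{r^{s+1}}\Big(\frac{r+1}{2}\Big)^{s-t}\frac{(4-s)r+s}{tr+4-t}\,\zeta_t(P\|Q).$$
   Context: $\Gamma_n=\{P=(p_1,\dots,p_n): p_i>0,\ \sum_i p_i=1\}$, $n\ge2$. For $P,Q\in\Gamma_n$ and $s\in\mathbb{R}$: $\zeta_s(P\|Q)=(s-1)^{-1}\sum_i(p_i-q_i)\big(\frac{p_i+q_i}{2q_i}\big)^{s-1}$ for $s\ne1$; $\zeta_1(P\|Q)=\sum_i(p_i-q_i)\ln\frac{p_i+q_i}{2q_i}$. $\zeta_s(Q\|P)$ is obtained by interchanging $p_i$ and $q_i$. *)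

From Stdlib Require Import Reals Lra.
Open Scope R_scope.

Fixpoint fsum (n : nat) (f : nat -> R) : R :=
  match n with
  | O => 0
  | S m => fsum m f + f m
  end.

Definition Gamma (n : nat) (p : nat -> R) : Prop :=
  (forall i, (i < n)%nat -> 0 < p i) /\ fsum n p = 1.

Definition zeta (n : nat) (s : R) (p q : nat -> R) : R :=
  match Req_EM_T s 1 with
  | left _ => fsum n (fun i => (p i - q i) * ln ((p i + q i) / (2 * q i)))
  | right _ => / (s - 1) *
      fsum n (fun i => (p i - q i) * Rpower ((p i + q i) / (2 * q i)) (s - 1))
  end.

(* Put x_i = p_i / q_i.  Both divergences are Csiszar sums [sum_i q_i f (x_i)]: zeta_t(P||Q)
   with generator g_t = [zeta_fn t] and zeta_s(Q||P) with generator f_s = [zeta_dual_fn s], and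
   both generators vanish at 1.  Their second derivatives satisfy f_s'' = K g_t'' with g_t'' >= 0,
   where K = [zeta_ratio s t] is nonincreasing for s, t in [2, 4].  Hence f_s - K(R) g_t and
   K(r) g_t - f_s are convex on [r, R], and a convex function vanishing at 1 has a nonnegative
   Csiszar sum: it lies above its tangent at 1, and sum_i q_i (x_i - 1) = 0. *)

From Stdlib Require Import Reals Lra.
From Coquelicot Require Import Coquelicot.
Open Scope R_scope.

Lemma fsum_ext n f g : (forall i, (i < n)%nat -> f i = g i) -> fsum n f = fsum n g.
Proof. induction n as [|n IH]; intros H; simpl; [reflexivity|]. rewrite IH, H; auto. Qed.

Lemma fsum_le n f g : (forall i, (i < n)%nat -> f i <= g i) -> fsum n f <= fsum n g.
Proof. induction n as [|n IH]; intros H; simpl; [lra|]. apply Rplus_le_compat; auto. Qed.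

Lemma fsum_plus n f g : fsum n (fun i => f i + g i) = fsum n f + fsum n g.
Proof. induction n as [|n IH]; simpl; [ring|]. rewrite IH. ring. Qed.

Lemma fsum_scal n c f : fsum n (fun i => c * f i) = c * fsum n f.
Proof. induction n as [|n IH]; simpl; [ring|]. rewrite IH. ring. Qed.

Lemma fsum_mean_bounds n q x a b :
  fsum n q = 1 -> (forall i, (i < n)%nat -> 0 <= q i /\ a <= x i <= b) ->
  a <= fsum n (fun i => q i * x i) <= b.
Proof.
intros Hq Hx. split.
- replace a with (fsum n (fun i => a * q i)) by (rewrite fsum_scal, Hq; ring).
  apply fsum_le. intros i Hi. destruct (Hx i Hi). nra.
- replace b with (fsum n (fun i => b * q i)) by (rewrite fsum_scal, Hq; ring).
  apply fsum_le. intros i Hi. destruct (Hx i Hi). nra.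
Qed.

Lemma Rpower_pred_mul z c : 0 < z -> Rpower z c = Rpower z (c - 1) * z.
Proof.
intros Hz. rewrite <- (Rpower_1 z) at 3 by exact Hz.
rewrite <- Rpower_plus. f_equal. ring.
Qed.

Lemma is_derive_Rpower_mul (v u : R -> R) (dv du c x d : R) :
  0 < v x -> is_derive v x dv -> is_derive u x du ->
  d = Rpower (v x) (c - 1) * (c * dv * u x + v x * du) ->
  is_derive (fun y => Rpower (v y) c * u y) x d.
Proof.
intros Hv Hdv Hdu ->.
assert (Hpow : is_derive (fun y => Rpower (v y) c) x (dv * (c * Rpower (v x) (c - 1)))).
{ apply (is_derive_comp (fun y => Rpower y c) v); [|exact Hdv].
  apply is_derive_Reals, derivable_pt_lim_power, Hv. }
replace (Rpower (v x) (c - 1) * (c * dv * u x + v x * du))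
  with (dv * (c * Rpower (v x) (c - 1)) * u x + Rpower (v x) c * du)
  by (rewrite (Rpower_pred_mul (v x) c Hv); ring).
exact (is_derive_mult _ _ x _ _ Hpow Hdu Rmult_comm).
Qed.

Definition twice_derivable_on (a b : R) (F F1 F2 : R -> R) : Prop :=
  forall y, a <= y <= b -> is_derive F y (F1 y) /\ is_derive F1 y (F2 y).

Lemma twice_derivable_on_lincomb (a b u v : R) (F F1 F2 G G1 G2 : R -> R) :
  twice_derivable_on a b F F1 F2 -> twice_derivable_on a b G G1 G2 ->
  twice_derivable_on a b (fun y => u * F y + v * G y)
    (fun y => u * F1 y + v * G1 y) (fun y => u * F2 y + v * G2 y).
Proof.
intros HF HG y Hy. destruct (HF y Hy) as [HF1 HF2], (HG y Hy) as [HG1 HG2].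
split; apply (is_derive_plus (fun z => u * _ z) (fun z => v * _ z));
  now apply is_derive_scal.
Qed.

Lemma mvt_closed (F dF : R -> R) (u v : R) :
  (forall y, Rmin u v <= y <= Rmax u v -> is_derive F y (dF y)) ->
  exists c, Rmin u v <= c <= Rmax u v /\ F v - F u = dF c * (v - u).
Proof.
intros H. apply MVT_gen.
- intros y Hy. apply H. lra.
- intros y Hy. apply continuity_pt_filterlim.
  apply (ex_derive_continuous F y). exists (dF y). now apply H.
Qed.

(* Two applications of the mean value theorem: [F x - F c - F1 c (x - c) = F2 e (d - c)(x - c)]
   with [d] between [c] and [x], and [e] between [c] and [d]. *)
Lemma tangent_le_of_deriv2_nonneg (a b : R) (F F1 F2 : R -> R) (c x : R) :
  twice_derivable_on a b F F1 F2 -> (forall y, a <= y <= b -> 0 <= F2 y) ->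
  a <= c <= b -> a <= x <= b -> F c + F1 c * (x - c) <= F x.
Proof.
intros HF H2 Hc Hx.
assert (Hin : forall u v y, a <= u <= b -> a <= v <= b ->
          Rmin u v <= y <= Rmax u v -> a <= y <= b).
{ intros u v y Hu Hv Hy. unfold Rmin, Rmax in Hy. destruct (Rle_dec u v); lra. }
destruct (mvt_closed (fun y => F y - F1 c * y) (fun y => F1 y - F1 c) c x)
  as [d [Hd Ed]].
{ intros y Hy. apply (is_derive_minus F (fun z => F1 c * z)).
  - apply (HF y (Hin c x y Hc Hx Hy)).
  - auto_derive; [exact I | ring]. }
assert (Hd' := Hin c x d Hc Hx Hd).
destruct (mvt_closed F1 F2 c d) as [e [He Ee]].
{ intros y Hy. apply (HF y (Hin c d y Hc Hd' Hy)). }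
assert (He' := H2 e (Hin c d e Hc Hd' He)).
assert (0 <= (d - c) * (x - c)) by (unfold Rmin, Rmax in Hd; destruct (Rle_dec c x); nra).
assert (0 <= (F1 d - F1 c) * (x - c)) by (rewrite Ee, Rmult_assoc; now apply Rmult_le_pos).
lra.
Qed.

Lemma fsum_nonneg_of_convex n (q x : nat -> R) a b (F F1 F2 : R -> R) :
  twice_derivable_on a b F F1 F2 -> (forall y, a <= y <= b -> 0 <= F2 y) ->
  a <= 1 <= b -> F 1 = 0 ->
  (forall i, (i < n)%nat -> 0 <= q i /\ a <= x i <= b) ->
  fsum n (fun i => q i * (x i - 1)) = 0 ->
  0 <= fsum n (fun i => q i * F (x i)).
Proof.
intros HF H2 H1 HF0 Hx Hsum.
replace 0 with (fsum n (fun i => F1 1 * (q i * (x i - 1))))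
  by (rewrite fsum_scal, Hsum; ring).
apply fsum_le. intros i Hi. destruct (Hx i Hi) as [Hq Hxi].
pose proof (tangent_le_of_deriv2_nonneg a b F F1 F2 1 (x i) HF H2 H1 Hxi).
rewrite HF0 in *. nra.
Qed.

Lemma fsum_comparison n (q x : nat -> R) a b m M (F F1 F2 G G1 G2 : R -> R) :
  twice_derivable_on a b F F1 F2 -> twice_derivable_on a b G G1 G2 ->
  (forall y, a <= y <= b -> m * G2 y <= F2 y <= M * G2 y) ->
  a <= 1 <= b -> F 1 = 0 -> G 1 = 0 ->
  (forall i, (i < n)%nat -> 0 <= q i /\ a <= x i <= b) ->
  fsum n (fun i => q i * (x i - 1)) = 0 ->
  m * fsum n (fun i => q i * G (x i)) <= fsum n (fun i => q i * F (x i))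
    <= M * fsum n (fun i => q i * G (x i)).
Proof.
intros HF HG H2 H1 HF0 HG0 Hx Hsum.
assert (Hlin : forall u v, fsum n (fun i => q i * (u * F (x i) + v * G (x i)))
          = u * fsum n (fun i => q i * F (x i)) + v * fsum n (fun i => q i * G (x i))).
{ intros u v. rewrite <- !fsum_scal, <- fsum_plus. apply fsum_ext. intros. ring. }
assert (Hnonneg : forall u v, (forall y, a <= y <= b -> 0 <= u * F2 y + v * G2 y) ->
          0 <= u * fsum n (fun i => q i * F (x i)) + v * fsum n (fun i => q i * G (x i))).
{ intros u v Huv. rewrite <- Hlin.
  apply (fsum_nonneg_of_convex n q x a b _ _ _
           (twice_derivable_on_lincomb a b u v _ _ _ _ _ _ HF HG)); auto.
  rewrite HF0, HG0. ring. }
split.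
- enough (0 <= 1 * fsum n (fun i => q i * F (x i)) + - m * fsum n (fun i => q i * G (x i)))
    by lra.
  apply Hnonneg. intros y Hy. specialize (H2 y Hy). lra.
- enough (0 <= -1 * fsum n (fun i => q i * F (x i)) + M * fsum n (fun i => q i * G (x i)))
    by lra.
  apply Hnonneg. intros y Hy. specialize (H2 y Hy). lra.
Qed.

Definition zeta_fn t x := Rpower ((x + 1) / 2) (t - 1) * ((x - 1) / (t - 1)).
Definition dzeta_fn t x :=
  Rpower ((x + 1) / 2) (t - 2) * ((x + 1) / (2 * (t - 1)) + (x - 1) / 2).
Definition d2zeta_fn t x := Rpower ((x + 1) / 2) (t - 3) * ((t * x + 4 - t) / 4).

Definition zeta_dual_fn s x := Rpower ((1 + x) / (2 * x)) (s - 1) * ((1 - x) / (s - 1)).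
Definition dzeta_dual_fn s x :=
  Rpower ((1 + x) / (2 * x)) (s - 2) * (- ((1 + x) / (2 * x)) / (s - 1) - (1 - x) / (2 * x ^ 2)).
Definition d2zeta_dual_fn s x :=
  Rpower ((1 + x) / (2 * x)) (s - 3) * (((4 - s) * x + s) / (4 * x ^ 4)).

Lemma zeta_fn_twice_derivable t a b :
  t <> 1 -> 0 < a -> twice_derivable_on a b (zeta_fn t) (dzeta_fn t) (d2zeta_fn t).
Proof.
intros Ht Ha y Hy.
assert (Hv : is_derive (fun z => (z + 1) / 2) y (1 / 2)) by (auto_derive; [exact I | field]).
split; eapply (is_derive_Rpower_mul (fun z => (z + 1) / 2)); try exact Hv; try lra.
- auto_derive; [repeat split; try intro; nra | reflexivity].
- unfold dzeta_fn. replace (t - 1 - 1) with (t - 2) by ring. field; repeat split; lra.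
- auto_derive; [repeat split; try intro; nra | reflexivity].
- unfold d2zeta_fn. replace (t - 2 - 1) with (t - 3) by ring. field; repeat split; lra.
Qed.

Lemma zeta_dual_fn_twice_derivable s a b :
  s <> 1 -> 0 < a -> twice_derivable_on a b (zeta_dual_fn s) (dzeta_dual_fn s) (d2zeta_dual_fn s).
Proof.
intros Hs Ha y Hy.
assert (Hv : is_derive (fun z => (1 + z) / (2 * z)) y (-1 / (2 * y ^ 2)))
  by (auto_derive; [lra | field; lra]).
split; eapply (is_derive_Rpower_mul (fun z => (1 + z) / (2 * z))); try exact Hv;
  try (apply Rdiv_lt_0_compat; lra).
- auto_derive; [repeat split; try intro; nra | reflexivity].
- unfold dzeta_dual_fn. replace (s - 1 - 1) with (s - 2) by ring. field; repeat split; lra.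
- auto_derive; [repeat split; try intro; nra | reflexivity].
- unfold d2zeta_dual_fn. replace (s - 2 - 1) with (s - 3) by ring. field; repeat split; lra.
Qed.

Definition zeta_ratio s t x :=
  / Rpower x (s + 1) * Rpower ((x + 1) / 2) (s - t) * (((4 - s) * x + s) / (t * x + 4 - t)).

Lemma d2zeta_dual_fn_eq s t x :
  0 < x -> t * x + 4 - t <> 0 -> d2zeta_dual_fn s x = zeta_ratio s t x * d2zeta_fn t x.
Proof.
intros Hx Ht. unfold d2zeta_dual_fn, zeta_ratio, d2zeta_fn.
set (P := (x + 1) / 2).
assert (HP : 0 < P) by (unfold P; lra).
replace ((1 + x) / (2 * x)) with (P * / x) by (unfold P; field; lra).
rewrite <- Rpower_mult_distr by (try apply Rinv_0_lt_compat; lra).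
assert (Hinv : Rpower (/ x) (s - 3) = / Rpower x (s - 3)).
{ unfold Rpower. rewrite ln_Rinv, <- exp_Ropp by lra. f_equal. ring. }
assert (Hx4 : Rpower x (s + 1) = Rpower x (s - 3) * x ^ 4).
{ replace (s + 1) with (s - 3 + INR 4) by (simpl; ring).
  rewrite Rpower_plus, Rpower_pow by lra. reflexivity. }
assert (HP3 : Rpower P (s - 3) = Rpower P (s - t) * Rpower P (t - 3)).
{ rewrite <- Rpower_plus. f_equal. ring. }
rewrite Hinv, Hx4, HP3.
assert (0 < Rpower x (s - 3)) by apply exp_pos.
field. repeat split; lra.
Qed.

Lemma zeta_ratio_power_part_antitone s t x y :
  -1 <= s -> -1 <= t -> 0 < x <= y ->
  / Rpower y (s + 1) * Rpower ((y + 1) / 2) (s - t)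
    <= / Rpower x (s + 1) * Rpower ((x + 1) / 2) (s - t).
Proof.
intros Hs Ht Hxy.
assert (Hexp : forall z, / Rpower z (s + 1) * Rpower ((z + 1) / 2) (s - t)
                 = exp (- (s + 1) * ln z + (s - t) * ln ((z + 1) / 2))).
{ intros z. unfold Rpower. rewrite <- exp_Ropp, <- exp_plus. f_equal. ring. }
rewrite !Hexp.
assert (Hln : ln x <= ln y) by (apply ln_le; lra).
assert (HlnP : ln ((x + 1) / 2) <= ln ((y + 1) / 2)) by (apply ln_le; lra).
(* the difference is [ln ((z + 1) / (2 z))] *)
assert (Hdiff : ln ((y + 1) / 2) - ln y <= ln ((x + 1) / 2) - ln x).
{ rewrite <- !ln_div by lra. apply ln_le; [apply Rdiv_lt_0_compat; lra|].
  apply Rmult_le_reg_r with (x * y); [nra|].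
  unfold Rdiv. field_simplify; lra. }
assert (Hmono : - (s + 1) * ln y + (s - t) * ln ((y + 1) / 2)
                <= - (s + 1) * ln x + (s - t) * ln ((x + 1) / 2)).
{ destruct (Rle_dec t s).
  - (* regroup the exponent as [-(t + 1) ln z + (s - t) (ln ((z + 1) / 2) - ln z)] *)
    assert (0 <= (s - t) * ((ln ((x + 1) / 2) - ln x) - (ln ((y + 1) / 2) - ln y)))
      by (apply Rmult_le_pos; lra).
    nra.
  - nra. }
destruct (Rle_lt_or_eq_dec _ _ Hmono) as [Hlt | ->]; [|lra].
left. now apply exp_increasing.
Qed.

Lemma zeta_ratio_rational_part_antitone s t x y :
  0 <= s <= 4 -> 0 <= t <= 4 -> 4 <= s + t -> 0 < x <= y ->
  ((4 - s) * y + s) / (t * y + 4 - t) <= ((4 - s) * x + s) / (t * x + 4 - t).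
Proof.
intros Hs Ht Hst Hxy.
assert (0 < t * x + 4 - t) by nra. assert (0 < t * y + 4 - t) by nra.
apply Rmult_le_reg_r with ((t * x + 4 - t) * (t * y + 4 - t)); [nra|].
unfold Rdiv. field_simplify; [|lra..].
(* the cross difference is [(y - x) (4 (s + t) - 16)] *)
nra.
Qed.

Lemma zeta_ratio_antitone s t x y :
  2 <= s <= 4 -> 2 <= t <= 4 -> 0 < x <= y -> zeta_ratio s t y <= zeta_ratio s t x.
Proof.
intros Hs Ht Hxy. unfold zeta_ratio.
apply Rmult_le_compat.
- rewrite <- Rpower_Ropp. apply Rmult_le_pos; apply Rlt_le, exp_pos.
- apply Rlt_le, Rdiv_lt_0_compat; nra.
- apply zeta_ratio_power_part_antitone; lra.
- apply zeta_ratio_rational_part_antitone; lra.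
Qed.

Lemma d2zeta_fn_nonneg t x : 0 <= t <= 4 -> 0 < x -> 0 <= d2zeta_fn t x.
Proof. intros Ht Hx. apply Rmult_le_pos; [apply Rlt_le, exp_pos | nra]. Qed.

Lemma zeta_eq_fsum n t p q :
  t <> 1 -> (forall i, (i < n)%nat -> 0 < q i) ->
  zeta n t p q = fsum n (fun i => q i * zeta_fn t (p i / q i)).
Proof.
intros Ht Hq. unfold zeta. destruct (Req_EM_T t 1); [contradiction|].
rewrite <- fsum_scal. apply fsum_ext. intros i Hi. specialize (Hq i Hi).
unfold zeta_fn. replace ((p i / q i + 1) / 2) with ((p i + q i) / (2 * q i)) by (field; lra).
field. lra.
Qed.

Lemma zeta_swap_eq_fsum n s p q :
  s <> 1 -> (forall i, (i < n)%nat -> 0 < p i /\ 0 < q i) ->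
  zeta n s q p = fsum n (fun i => q i * zeta_dual_fn s (p i / q i)).
Proof.
intros Hs Hpq. unfold zeta. destruct (Req_EM_T s 1); [contradiction|].
rewrite <- fsum_scal. apply fsum_ext. intros i Hi. destruct (Hpq i Hi).
unfold zeta_dual_fn.
replace ((1 + p i / q i) / (2 * (p i / q i))) with ((q i + p i) / (2 * p i)) by (field; lra).
field. lra.
Qed.

Theorem theorem4p1 (n : nat) (p q : nat -> R) (r R0 s t : R) :
  (2 <= n)%nat ->
  Gamma n p -> Gamma n q ->
  0 < r -> r <= R0 ->
  (forall i, (i < n)%nat -> r <= p i / q i <= R0) ->
  2 <= s <= 4 -> 2 <= t <= 4 ->
  / Rpower R0 (s + 1) * Rpower ((R0 + 1) / 2) (s - t)
    * (((4 - s) * R0 + s) / (t * R0 + 4 - t)) * zeta n t p q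
  <= zeta n s q p
  /\
  zeta n s q p
  <= / Rpower r (s + 1) * Rpower ((r + 1) / 2) (s - t)
    * (((4 - s) * r + s) / (t * r + 4 - t)) * zeta n t p q.
Proof.
intros _ [Hp Sp] [Hq Sq] Hr HrR Hx Hs Ht.
change (zeta_ratio s t R0 * zeta n t p q <= zeta n s q p
        /\ zeta n s q p <= zeta_ratio s t r * zeta n t p q).
set (x i := p i / q i).
assert (Hw : forall i, (i < n)%nat -> 0 <= q i /\ r <= x i <= R0)
  by (intros i Hi; split; [apply Rlt_le, Hq | apply Hx]; exact Hi).
assert (Hmean : fsum n (fun i => q i * x i) = 1).
{ rewrite <- Sp. apply fsum_ext. intros i Hi. unfold x. specialize (Hq i Hi). field. lra. }
assert (H1 : r <= 1 <= R0) by (rewrite <- Hmean; now apply fsum_mean_bounds).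
assert (Hcentered : fsum n (fun i => q i * (x i - 1)) = 0).
{ replace (fsum n (fun i => q i * (x i - 1)))
    with (fsum n (fun i => q i * x i) + -1 * fsum n q)
    by (rewrite <- fsum_scal, <- fsum_plus; apply fsum_ext; intros; ring).
  lra. }
assert (Hd2 : forall y, r <= y <= R0 ->
          zeta_ratio s t R0 * d2zeta_fn t y <= d2zeta_dual_fn s y
          <= zeta_ratio s t r * d2zeta_fn t y).
{ intros y Hy. rewrite (d2zeta_dual_fn_eq s t y) by nra.
  assert (0 <= d2zeta_fn t y) by (apply d2zeta_fn_nonneg; lra).
  split; apply Rmult_le_compat_r; auto; apply zeta_ratio_antitone; lra. }
rewrite (zeta_eq_fsum n t p q) by (lra || exact Hq).
rewrite (zeta_swap_eq_fsum n s p q) by (lra || (intros i Hi; auto)).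
apply (fsum_comparison n q x r R0 _ _ _ _ _ _ _ _
         (zeta_dual_fn_twice_derivable s r R0 ltac:(lra) Hr)
         (zeta_fn_twice_derivable t r R0 ltac:(lra) Hr) Hd2 H1); auto;
  unfold zeta_dual_fn, zeta_fn, Rdiv; ring.
Qed.
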